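(* Let $\alpha>0$ and $\beta\le\alpha$. Then the Sharma-Mittal entropy $S_{\alpha,\beta}$ is supermodular on the majorization lattice: for all $\mathbf{p},\mathbf{q}\in\mathcal{P}_n$, $$S_{\alpha,\beta}(\mathbf{p})+S_{\alpha,\beta}(\mathbf{q})\le S_{\alpha,\beta}(\mathbf{p}\wedge\mathbf{q})+S_{\alpha,\beta}(\mathbf{p}\vee\mathbf{q}).$$
   Context: $\mathcal{P}_n=\{\mathbf{p}=(p_1,\dots,p_n): p_i\ge0,\ \sum_i p_i=1\}$, with all vectors taken with components in non-increasing order. Majorization: $\mathbf{p}\preceq\mathbf{q}$ iff $\sum_{i=1}^k p_i\le\sum_{i=1}^k q_i$ for $k=1,\dots,n$; $(\mathcal{P}_n,\preceq)$ is a lattice. Its greatest lower bound $\mathbf{p}\wedge\mathbf{q}=\mathbf{r}$ satisfies $\sum_{i=1}^k r_i=\min\{\sum_{i=1}^k p_i,\sum_{i=1}^k q_i\}$. Its least upper bound $\mathbf{p}\vee\mathbf{q}$ is the least element of $\mathcal{P}_n$ (w.r.t. $\preceq$) majorizing both; concretely, let $\mathbf{w}$ satisfy $\sum_{i=1}^k w_i=\max\{\sum_{i=1}^k p_i,\sum_{i=1}^k q_i\}$; if $\mathbf{w}$ is non-increasing then $\mathbf{p}\vee\mathbf{q}=\mathbf{w}$, otherwise $\mathbf{p}\vee\mathbf{q}$ is obtained by repeatedly replacing each maximal consecutive block of coordinates violating the non-increasing order by its average until the vector is non-increasing. The Sharma-Mittal entropy is $S_{\alpha,\beta}(\mathbf{p})=\frac{1}{1-\beta}\left[\left(\sum_{i=1}^n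 p_i^\alpha\right)^{\frac{1-\beta}{1-\alpha}}-1\right]$, with values at $\alpha=1$ and/or $\beta=1$ defined by the corresponding limits. *)

From mathcomp Require Import all_boot all_order all_algebra.
From mathcomp Require Import reals sequences exp.
Set Implicit Arguments. Unset Strict Implicit. Unset Printing Implicit Defensive.
Import Order.TTheory GRing.Theory Num.Theory.
Local Open Scope ring_scope.

Section SM.
Variables (R : realType) (n : nat).

Definition prob_vec (p : 'I_n -> R) : Prop :=
  (forall i, 0 <= p i) /\ (\sum_(i < n) p i = 1) /\
  (forall i j : 'I_n, (i <= j)%N -> p j <= p i).

Definition psum (p : 'I_n -> R) (k : nat) : R := \sum_(i < n | (i < k)%N) p i.

Definition majorized (p q : 'I_n -> R) : Prop :=
  forall k : nat, (1 <= k <= n)%N -> psum p k <= psum q k.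

Definition is_meet (p q r : 'I_n -> R) : Prop :=
  prob_vec r /\ majorized r p /\ majorized r q /\
  (forall s, prob_vec s -> majorized s p -> majorized s q -> majorized s r).

Definition is_join (p q w : 'I_n -> R) : Prop :=
  prob_vec w /\ majorized p w /\ majorized q w /\
  (forall s, prob_vec s -> majorized p s -> majorized q s -> majorized w s).

(* Shannon entropy, with 0 ln 0 = 0 (ln 0 = 0 in mathcomp-analysis) *)
Definition shannon (p : 'I_n -> R) : R := - \sum_(i < n) p i * ln (p i).

(* sum_i p_i^alpha (0^alpha = 0 for alpha <> 0) *)
Definition powsum (a : R) (p : 'I_n -> R) : R := \sum_(i < n) p i `^ a.

(* Sharma-Mittal entropy, limiting cases alpha = 1 and/or beta = 1 written
   as their (standard) closed-form limits *)
Definition sharma_mittal (a b : R) (p : 'I_n -> R) : R :=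
  if a == 1 then
    (if b == 1 then shannon p
     else (expR ((1 - b) * shannon p) - 1) / (1 - b))
  else
    (if b == 1 then ln (powsum a p) / (1 - a)
     else ((powsum a p) `^ ((1 - b) / (1 - a)) - 1) / (1 - b)).

End SM.

(* Each Sharma-Mittal entropy is h (G p) with G p = sum_i phi (p i) for a concave
   phi (t ^ alpha, - t ^ alpha or - t ln t according as alpha < 1, alpha > 1 or
   alpha = 1) and, because beta <= alpha, h convex and monotone in the matching
   direction.  Let u and v be the increments of the pointwise maximum and minimum
   of the partial sums of p and q.  Coordinatewise (u i, v i) lies between p i and
   q i with the same sum, so concavity gives G p + G q <= G u + G v.  The partial
   sums of r are below those of v, so Karamata's inequality gives G v <= G r.  The
   partial sums of w are above those of u, but w is constant across every index
   where they differ, so the summation-by-parts error term in the supporting-line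
   estimate vanishes and G u <= G w.  As moreover G p, G q <= G r, the convex
   monotone h preserves G p + G q <= G r + G w. *)

From mathcomp Require Import all_boot all_order all_algebra.
From mathcomp Require Import reals sequences exp.
From mathcomp Require Import lra ring.
Import Order.TTheory GRing.Theory Num.Theory.
Local Open Scope ring_scope.

Set Implicit Arguments. Unset Strict Implicit. Unset Printing Implicit Defensive.

Section SupportingLines.
Variable R : realType.
Implicit Types u x y z g : R.

Lemma expR_tangent z0 z : expR z0 * (1 + (z - z0)) <= expR z.
Proof.
have -> : expR z = expR z0 * expR (z - z0) by rewrite -expRD addrC subrK.
by rewrite ler_wpM2l ?expR_ge0 // expR_ge1Dx.
Qed.

Lemma powR_le_bernoulli u g : 0 < u -> 0 <= g <= 1 -> u `^ g <= 1 + g * (u - 1).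
Proof.
move=> u0 /andP[g0 g1]; rewrite /powR (gt_eqF u0).
have e1 := expR_tangent (g * ln u) (ln u); rewrite lnK // in e1.
have e2 := expR_tangent (g * ln u) 0; rewrite expR0 in e2.
(* convex combination of the supporting lines of expR at g * ln u *)
have g1' : 0 <= 1 - g by lra.
have := ler_wpM2l g1' e2; have := ler_wpM2l g0 e1; lra.
Qed.

Lemma powR_ge_bernoulli u g : 0 < u -> (1 <= g) || (g <= 0) ->
  1 + g * (u - 1) <= u `^ g.
Proof.
move=> u0 /orP[g1|g0].
- have g0 : 0 < g by lra.
  have gV : 0 <= g^-1 <= 1 by rewrite invr_ge0 ltW //= invf_le1.
  have := powR_le_bernoulli (powR_gt0 g u0) gV.
  rewrite -powRrM divff ?(gt_eqF g0) // (powRr1 (ltW u0)).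
  move/(ler_wpM2l (ltW g0)); rewrite mulrDr mulrA divff ?(gt_eqF g0); lra.
- rewrite /powR (gt_eqF u0).
  have := expR_ge1Dx (g * ln u); have := expR_ge1Dx (ln u); rewrite lnK // => hu.
  have : g * (u - 1 - ln u) <= 0 by apply: mulr_le0_ge0 => //; lra.
  lra.
Qed.

Lemma powR_tangentE x y g : 0 < x -> 0 < y ->
  y `^ g = x `^ g * (y / x) `^ g /\
  x `^ g + g * (x `^ g / x) * (y - x) = x `^ g * (1 + g * (y / x - 1)).
Proof.
move=> x0 y0; split; last by field; rewrite gt_eqF.
by rewrite -powRM ?divr_ge0 ?ltW // mulrCA divff ?gt_eqF ?mulr1.
Qed.

Lemma powR_le_tangent x y g : 0 < x -> 0 < y -> 0 <= g <= 1 ->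
  y `^ g <= x `^ g + g * (x `^ g / x) * (y - x).
Proof.
move=> x0 y0 g01; have [-> ->] := powR_tangentE g x0 y0.
by rewrite ler_wpM2l ?powR_ge0 // powR_le_bernoulli ?divr_gt0.
Qed.

Lemma powR_ge_tangent x y g : 0 < x -> 0 < y -> (1 <= g) || (g <= 0) ->
  x `^ g + g * (x `^ g / x) * (y - x) <= y `^ g.
Proof.
move=> x0 y0 g01; have [-> ->] := powR_tangentE g x0 y0.
by rewrite ler_wpM2l ?powR_ge0 // powR_ge_bernoulli ?divr_gt0.
Qed.

Lemma ln_le_tangent x y : 0 < x -> 0 < y -> ln y <= ln x + (y - x) / x.
Proof.
move=> x0 y0; have yx : -1 < y / x - 1 by rewrite -subr_gt0 opprK subrK divr_gt0.
have := le_ln1Dx yx; rewrite [1 + _]addrC subrK ln_div ?posrE //.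
have -> : y / x - 1 = (y - x) / x by field; rewrite gt_eqF.
lra.
Qed.

End SupportingLines.

Section Gradients.
Variable R : realType.
Implicit Types (D : R -> Prop) (h g phi c : R -> R) (a b s t x y : R).

Definition subgradient D h g :=
  forall s t, D s -> D t -> h s + g s * (t - s) <= h t.

(* Supporting lines are only required at s > 0, as the slope of t ^ a is
   infinite at 0, but they must bound phi on all of [0, +oo[. *)
Definition supergradient phi c :=
  forall s t, 0 < s -> 0 <= t -> phi t <= phi s + c s * (t - s).

Lemma subgradient_mono D h g s t :
  subgradient D h g -> D s -> D t -> s <= t -> g s <= g t.
Proof.
move=> hg Ds Dt; rewrite le_eqVlt => /predU1P[-> // | st].
have := hg s t Ds Dt; have := hg t s Dt Ds => h1 h2.
have : 0 <= (g t - g s) * (t - s) by lra.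
by rewrite pmulr_lge0 ?subr_gt0 // subr_ge0.
Qed.

Lemma supergradient_subgradient phi c : supergradient phi c ->
  subgradient (fun x => 0 < x) (fun t => - phi t) (fun s => - c s).
Proof. by move=> hc s t s0 t0; have := hc s t s0 (ltW t0); lra. Qed.

Lemma supergradient_antitone phi c s t :
  supergradient phi c -> 0 < s -> s <= t -> c t <= c s.
Proof.
move=> /supergradient_subgradient hc s0 st.
by rewrite -lerN2; apply: subgradient_mono hc s0 (lt_le_trans s0 st) st.
Qed.

Lemma supergradient_powR a : 0 < a <= 1 ->
  supergradient (fun t => t `^ a) (fun s => a * (s `^ a / s)).
Proof.
move=> /andP[a0 a1] s t s0; rewrite le_eqVlt => /predU1P[<- | t0] /=.
  rewrite powR0 ?gt_eqF //.
  have -> : a * (s `^ a / s) * (0 - s) = - (a * s `^ a) by field; rewrite gt_eqF.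
  have := powR_ge0 s a; nra.
by apply: powR_le_tangent => //; rewrite ltW.
Qed.

Lemma supergradient_NpowR a : 1 <= a ->
  supergradient (fun t => - t `^ a) (fun s => - (a * (s `^ a / s))).
Proof.
move=> a1 s t s0; rewrite le_eqVlt => /predU1P[<- | t0] /=.
  rewrite powR0 ?gt_eqF //; last by apply: lt_le_trans a1.
  have -> : - (a * (s `^ a / s)) * (0 - s) = a * s `^ a by field; rewrite gt_eqF.
  have := powR_ge0 s a; nra.
by have := powR_ge_tangent s0 t0 (_ : (1 <= a) || _); rewrite a1 => /(_ isT); lra.
Qed.

Lemma supergradient_entropy :
  supergradient (fun t => - (t * ln t)) (fun s => - ln s - 1).
Proof.
move=> s t s0; rewrite le_eqVlt => /predU1P[<- | t0]; first by rewrite mul0r; lra.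
have := ler_wpM2l (ltW t0) (ln_le_tangent t0 s0).
have -> : t * (ln t + (s - t) / t) = t * ln t + (s - t) by field; rewrite gt_eqF.
lra.
Qed.

Lemma pair_le_of_subgradient_ge0 D h g a b x y :
    subgradient D h g -> (forall s, D s -> 0 <= g s) ->
    D a -> D b -> D x -> D y -> x <= a -> y <= a -> x + y <= a + b ->
  h x + h y <= h a + h b.
Proof.
move=> hg g0 Da Db; wlog xy : x y / x <= y.
  move=> W Dx Dy xa ya xyab; have [xy|/ltW yx] := leP x y; first exact: W.
  by rewrite addrC; apply: W => //; rewrite addrC.
move=> Dx Dy xa ya xyab.
have t1 := hg y a Dy Da; have t2 := hg x b Dx Db.
have gx0 := g0 x Dx; have gy0 := g0 y Dy; have gxy := subgradient_mono hg Dx Dy xy.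
have [bx|xb] := leP x b.
  have : 0 <= g x * (b - x) by apply: mulr_ge0; lra.
  have : 0 <= g y * (a - y) by apply: mulr_ge0; lra.
  lra.
(* b < x: trade the slope at x for the larger slope at y *)
have : g y * (b - x) <= g x * (b - x) by apply: ler_wnM2r; lra.
have : 0 <= g y * ((a + b) - (x + y)) by apply: mulr_ge0; lra.
lra.
Qed.

Lemma pair_le_of_subgradient_le0 D h g a b x y :
    subgradient D h g -> (forall s, D s -> g s <= 0) ->
    D a -> D b -> D x -> D y -> a <= x -> a <= y -> a + b <= x + y ->
  h x + h y <= h a + h b.
Proof.
move=> hg g0 Da Db Dx Dy ax ay abxy.
have := @pair_le_of_subgradient_ge0 (fun t => D (- t)) (fun t => h (- t))
  (fun t => - g (- t)) (- a) (- b) (- x) (- y).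
rewrite !opprK; apply; rewrite ?opprK ?lerN2 //; last lra.
- by move=> s t Ds Dt; have := hg _ _ Ds Dt; lra.
- by move=> s Ds; rewrite oppr_ge0 g0.
Qed.

End Gradients.

Section PartialSums.
Variable R : realType.
Implicit Types x y c d : nat -> R.

Definition partial_sum x k : R := \sum_(i < k) x i.

Lemma partial_sum0 x : partial_sum x 0 = 0.
Proof. exact: big_ord0. Qed.

Lemma partial_sumS x k : partial_sum x k.+1 = partial_sum x k + x k.
Proof. exact: big_ord_recr. Qed.

Lemma partial_sumB x y k :
  partial_sum (fun i => x i - y i) k = partial_sum x k - partial_sum y k.
Proof. exact: sumrB. Qed.

Lemma partial_sum_telescope x k :
  partial_sum (fun i => x i.+1 - x i) k = x k - x 0.
Proof.
by rewrite /partial_sum -(big_mkord xpredT (fun i => x i.+1 - x i)) telescope_sumr.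
Qed.

Lemma partial_sum_le N x k j : (forall i, (i < N)%N -> 0 <= x i) ->
  (k <= j <= N)%N -> partial_sum x k <= partial_sum x j.
Proof.
move=> x0 /andP[+ jN]; elim: j jN => [|j IH] jN; first by rewrite leqn0 => /eqP ->.
rewrite leq_eqVlt => /predU1P[-> // | kj].
by rewrite partial_sumS ler_wpDr ?x0 ?IH // ltnW.
Qed.

Lemma sum_by_parts c d M : \sum_(i < M.+1) c i * d i =
  c M * partial_sum d M.+1 + \sum_(i < M) partial_sum d i.+1 * (c i - c i.+1).
Proof.
elim: M => [|M IH]; first by rewrite big_ord1 big_ord0 /partial_sum big_ord1 addr0.
by rewrite big_ord_recr /= IH [in RHS]big_ord_recr /= !partial_sumS; ring.
Qed.

Definition antitone_upto N x := forall i j, (i <= j)%N -> (j < N)%N -> x j <= x i.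

Lemma antitone_uptoS N x :
  (forall i, (i.+1 < N)%N -> x i.+1 <= x i) -> antitone_upto N x.
Proof.
move=> h i j + jN; elim: j jN => [|j IH] jN; first by rewrite leqn0 => /eqP ->.
rewrite leq_eqVlt => /predU1P[-> // | ij].
exact: le_trans (h _ jN) (IH (ltnW jN) ij).
Qed.

Lemma partial_sum_tail0 N x k : antitone_upto N x ->
  (forall i, (i < N)%N -> 0 <= x i) -> (k < N)%N -> x k = 0 ->
  partial_sum x k = partial_sum x N.
Proof.
move=> xs x0 kN xk; rewrite /partial_sum -!(big_mkord xpredT).
rewrite (big_cat_nat (leq0n k) (ltnW kN)) /= [X in _ = _ + X]big1_seq ?addr0 //.
move=> i /andP[_]; rewrite mem_index_iota => /andP[ki iN].
by apply/eqP; rewrite eq_le x0 // andbT -xk xs.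
Qed.

Definition join_incr x y i : R :=
  Num.max (partial_sum x i.+1) (partial_sum y i.+1) -
  Num.max (partial_sum x i) (partial_sum y i).

Definition meet_incr x y i : R := x i + y i - join_incr x y i.

Lemma partial_sum_join_incr x y k :
  partial_sum (join_incr x y) k = Num.max (partial_sum x k) (partial_sum y k).
Proof. by rewrite partial_sum_telescope !partial_sum0 maxxx subr0. Qed.

Lemma partial_sum_meet_incr x y k :
  partial_sum (meet_incr x y) k = Num.min (partial_sum x k) (partial_sum y k).
Proof.
rewrite partial_sumB partial_sum_join_incr /partial_sum big_split /=.
by rewrite -[X in X - _ = _]addr_min_max addrK.
Qed.

Lemma join_incr_between x y i :
  Num.min (x i) (y i) <= join_incr x y i <= Num.max (x i) (y i).
Proof.
rewrite /join_incr !partial_sumS.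
case: (leP (x i) (y i)) => ?; case: (leP (partial_sum x i) (partial_sum y i)) => ?;
  case: (leP (partial_sum x i + x i) (partial_sum y i + y i)) => ?;
  apply/andP; split; lra.
Qed.

Definition transfer x (k : nat) (e : R) i : R :=
  if i == k then x i - e else if i == k.+1 then x i + e else x i.

Lemma partial_sum_transfer x k e j :
  partial_sum (transfer x k e) j = partial_sum x j - (if j == k.+1 then e else 0).
Proof.
elim: j => [|j IH]; first by rewrite !partial_sum0 subr0.
rewrite !partial_sumS IH /transfer eqSS.
case: (j =P k) => [-> | _]; first by rewrite (ltn_eqF (ltnSn k)); lra.
by case: ifP => _; lra.
Qed.

Lemma antitone_transfer N x k e : antitone_upto N x -> 0 <= e ->
  e * 2 <= x k - x k.+1 -> antitone_upto N (transfer x k e).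
Proof.
move=> xs e0 ek; apply: antitone_uptoS => i iN; rewrite /transfer eqSS.
have xi := xs i i.+1 (leqnSn i) iN.
have [-> | _] := eqVneq i k; first by rewrite (gtn_eqF (ltnSn k)); lra.
have [<- | _] := eqVneq i.+1 k.
  by rewrite (ltn_eqF (leqW (ltnSn i))); lra.
by case: ifP => _; lra.
Qed.

End PartialSums.

Section Karamata.
Variables (R : realType) (phi c : R -> R).
Hypothesis hc : supergradient phi c.
Implicit Types x y : nat -> R.

(* Sum the supporting lines at the x i and rearrange the error term by parts. *)
Lemma sum_concave_le N x y :
    (forall i, (i < N)%N -> 0 <= x i) -> (forall i, (i < N)%N -> 0 <= y i) ->
    (forall i, (i < N)%N -> x i = 0 -> y i = 0) ->
    partial_sum y N = partial_sum x N ->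
    (forall k, (k.+1 < N)%N ->
       (partial_sum y k.+1 - partial_sum x k.+1) * (c (x k) - c (x k.+1)) <= 0) ->
  \sum_(i < N) phi (y i) <= \sum_(i < N) phi (x i).
Proof.
move=> x0 y0 xy0 yxN hk.
apply: (@le_trans _ _ (\sum_(i < N) (phi (x i) + c (x i) * (y i - x i)))).
  apply: ler_sum => i _; have := x0 i (ltn_ord i).
  rewrite le_eqVlt => /predU1P[xi | xi]; last exact: hc xi (y0 i (ltn_ord i)).
  by rewrite (xy0 i (ltn_ord i) (esym xi)) -xi subrr mulr0 addr0.
rewrite big_split /= gerDl.
case: N x0 y0 xy0 yxN hk => [|M] x0 y0 xy0 yxN hk; first by rewrite big_ord0.
rewrite (sum_by_parts (fun i => c (x i)) (fun i => y i - x i)).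
rewrite partial_sumB yxN subrr mulr0 add0r.
apply: sumr_le0 => i _; rewrite partial_sumB; apply: hk.
by rewrite ltnS ltn_ord.
Qed.

Lemma karamata_le N x y : antitone_upto N x ->
    (forall i, (i < N)%N -> 0 <= x i) -> (forall i, (i < N)%N -> 0 <= y i) ->
    partial_sum y N = partial_sum x N ->
    (forall k, (k <= N)%N -> partial_sum x k <= partial_sum y k) ->
  \sum_(i < N) phi (y i) <= \sum_(i < N) phi (x i).
Proof.
move=> xs x0 y0 yxN xy.
have tail k : (k < N)%N -> x k = 0 -> partial_sum y k = partial_sum x k /\ y k = 0.
  move=> kN xk; have := partial_sum_tail0 xs x0 kN xk.
  have := partial_sum_le y0 (_ : (k.+1 <= N <= N)%N).
  rewrite kN leqnn yxN => /(_ isT).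
  have := xy k (ltnW kN); have := y0 k kN; rewrite partial_sumS; lra.
apply: sum_concave_le => //; first by move=> i iN /(tail i iN)[].
move=> k kN.
have := x0 _ kN; rewrite le_eqVlt => /predU1P[xk | xk].
  by have [-> _] := tail _ kN (esym xk); rewrite subrr mul0r.
apply: mulr_ge0_le0; first by rewrite subr_ge0 xy // ltnW.
by rewrite subr_le0 (supergradient_antitone hc xk) // xs.
Qed.

Lemma flat_majorant_le N x y : antitone_upto N x ->
    (forall i, (i < N)%N -> 0 <= x i) -> (forall i, (i < N)%N -> 0 <= y i) ->
    partial_sum y N = partial_sum x N ->
    (forall k, (k <= N)%N -> partial_sum y k <= partial_sum x k) ->
    (forall k, (k.+1 < N)%N ->
       partial_sum y k.+1 = partial_sum x k.+1 \/ x k = x k.+1) ->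
  \sum_(i < N) phi (y i) <= \sum_(i < N) phi (x i).
Proof.
move=> xs x0 y0 yxN yx flat.
have yN i : (i < N)%N -> x i = 0 -> partial_sum y i = partial_sum x N.
  elim: i => [|i IH] iN xi.
    by have := partial_sum_tail0 xs x0 iN xi; rewrite !partial_sum0.
  have xN := partial_sum_tail0 xs x0 iN xi.
  have [-> // | xii] := flat i iN.
  have := IH (ltnW iN) (etrans xii xi); have := yx _ (ltnW iN).
  rewrite xN partial_sumS; have := y0 i (ltnW iN); lra.
apply: sum_concave_le => // [i iN xi | k kN]; last first.
  by have [-> | ->] := flat k kN; rewrite subrr ?mul0r ?mulr0.
have := yx _ iN; rewrite !partial_sumS yN // (partial_sum_tail0 xs x0 iN xi) xi.
have := y0 i iN; lra.
Qed.

Lemma two_point_le (x y a : R) :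
  0 <= x -> 0 <= y -> Num.min x y <= a <= Num.max x y ->
  phi x + phi y <= phi a + phi (x + y - a).
Proof.
wlog xy : x y / x <= y.
  move=> W x0 y0 hxy; have [xy | /ltW yx] := leP x y; first exact: W.
  by have := W y x yx y0 x0; rewrite minC maxC addrC [y + x]addrC; apply.
move=> x0 y0; rewrite (min_l xy) (max_r xy) => /andP[xa ay].
have key a' b' : x <= a' -> a' <= b' -> b' <= y -> a' + b' = x + y ->
    phi x + phi y <= phi a' + phi b'.
  move=> xa' ab' by' abxy; have [xa_eq | xna] := eqVneq x a'.
    by rewrite -xa_eq (_ : b' = y) //; lra.
  have a0 : 0 < a' by apply: le_lt_trans x0 _; rewrite lt_neqAle xna.
  have t1 := hc a0 x0; have t2 := hc (lt_le_trans a0 ab') y0.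
  have e : y - b' = a' - x by lra.
  rewrite e in t2; have cab := supergradient_antitone hc a0 ab'.
  have : c b' * (a' - x) <= c a' * (a' - x) by apply: ler_wpM2r; lra.
  lra.
have [ab | /ltW ba] := leP a (x + y - a); first by apply: (key a (x + y - a)); lra.
by rewrite [phi a + _]addrC; apply: (key (x + y - a) a); lra.
Qed.

End Karamata.

Section Lattice.
Variables (R : realType) (n' : nat).
Local Notation n := n'.+1.
Implicit Types (f g p q r w : 'I_n -> R) (x : nat -> R).

(* [nfun f i] is [f ord0] for [i >= n]; only indices below [n] are used. *)
Definition nfun f : nat -> R := fun i => f (inord i).

Lemma sum_nfun (phi : R -> R) f :
  \sum_(i < n) phi (f i) = \sum_(i < n) phi (nfun f i).
Proof. by apply: eq_bigr => i _; rewrite /nfun inord_val. Qed.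

Lemma psum_nfun f k : (k <= n)%N -> psum f k = partial_sum (nfun f) k.
Proof.
move=> kn; rewrite /partial_sum (big_ord_widen n (nfun f) kn) /psum.
by apply: eq_bigr => i _; rewrite /nfun inord_val.
Qed.

Lemma psum_of_nat x k :
  (k <= n)%N -> psum (fun i : 'I_n => x i) k = partial_sum x k.
Proof.
move=> kn; rewrite psum_nfun //; apply: eq_bigr => i _.
by rewrite /nfun inordK // (leq_trans (ltn_ord i) kn).
Qed.

Lemma majorized_nfun f g : majorized f g ->
  forall k, (k <= n)%N -> partial_sum (nfun f) k <= partial_sum (nfun g) k.
Proof.
move=> fg [|k] kn; first by rewrite !partial_sum0.
by rewrite -!psum_nfun //; apply: fg.
Qed.

Lemma prob_vec_nfun f : prob_vec f ->
  [/\ antitone_upto n (nfun f), forall i, (i < n)%N -> 0 <= nfun f i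
    & partial_sum (nfun f) n = 1].
Proof.
move=> [f0 [f1 fs]]; split.
- by move=> i j ij jn; apply: fs; rewrite !inordK // (leq_ltn_trans ij jn).
- by move=> i _; apply: f0.
- by rewrite -psum_nfun // /psum; under eq_bigl do rewrite ltn_ord.
Qed.

Lemma prob_vec_transfer w k e : prob_vec w -> (k.+1 < n)%N -> 0 <= e ->
  e * 2 <= nfun w k - nfun w k.+1 ->
  prob_vec (fun i : 'I_n => transfer (nfun w) k e i).
Proof.
move=> /prob_vec_nfun[ws w0 w1] kn e0 ek; split; [|split].
- move=> i; have := w0 _ kn; have := w0 i (ltn_ord i); rewrite /transfer.
  by case: (_ =P k) => [-> | _]; [lra | case: ifP => _; lra].
- change (partial_sum (transfer (nfun w) k e) n = 1).
  by rewrite partial_sum_transfer (gtn_eqF kn) subr0.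
- by move=> i j ij; apply: (antitone_transfer ws e0 ek) ij (ltn_ord j).
Qed.

(* A least upper bound is flat wherever its partial sums exceed those of
   both p and q: otherwise moving a little mass from w k to w k.+1 would give
   a smaller upper bound. *)
Lemma join_flat p q w k : is_join p q w -> (k.+1 < n)%N ->
  Num.max (partial_sum (nfun p) k.+1) (partial_sum (nfun q) k.+1) =
    partial_sum (nfun w) k.+1 \/ nfun w k = nfun w k.+1.
Proof.
move=> [hw [pw [qw wmin]]] kn.
set M := Num.max _ _; set W := partial_sum (nfun w) k.+1.
have MW : M <= W by rewrite ge_max !majorized_nfun // ltnW.
have [ws _ _] := prob_vec_nfun hw.
have wk : nfun w k.+1 <= nfun w k := ws _ _ (leqnSn k) kn.
have [-> | MW'] := eqVneq M W; [by left | right].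
apply/eqP; apply: contraT => wk'.
pose e := Num.min (W - M) ((nfun w k - nfun w k.+1) / 2).
have e0 : 0 < e.
  by rewrite lt_min !subr_gt0 lt_neqAle MW' MW /= divr_gt0 // subr_gt0 lt_def wk'.
have eWM : e <= W - M by rewrite ge_min lexx.
have ew : e * 2 <= nfun w k - nfun w k.+1.
  by rewrite -ler_pdivlMr // ge_min lexx orbT.
have maj f : majorized f w -> partial_sum (nfun f) k.+1 <= M ->
    majorized f (fun i : 'I_n => transfer (nfun w) k e i).
  move=> fw fM j /andP[j1 jn]; rewrite psum_of_nat // partial_sum_transfer.
  case: (j =P k.+1) => [-> | _]; first by rewrite psum_nfun ?(ltnW kn) // -/W; lra.
  by rewrite subr0 -psum_nfun //; apply: fw; rewrite j1.
have pM : partial_sum (nfun p) k.+1 <= M by rewrite le_max lexx.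
have qM : partial_sum (nfun q) k.+1 <= M by rewrite le_max lexx orbT.
have := wmin _ (prob_vec_transfer hw kn (ltW e0) ew) (maj p pw pM) (maj q qw qM) k.+1.
rewrite psum_of_nat ?psum_nfun ?(ltnW kn) // partial_sum_transfer eqxx -/W.
by move=> /(_ isT); lra.
Qed.

End Lattice.

Section ConcaveSums.
Variables (R : realType) (n' : nat) (phi c : R -> R).
Hypothesis hc : supergradient phi c.
Local Notation n := n'.+1.
Local Notation G f := (\sum_(i < n) phi (f i)).
Implicit Types f g p q r w : 'I_n -> R.

Lemma sum_concave_majorized f g : prob_vec f -> prob_vec g -> majorized f g ->
  G g <= G f.
Proof.
move=> /prob_vec_nfun[fs f0 f1] /prob_vec_nfun[_ g0 g1] fg.
rewrite (sum_nfun phi f) (sum_nfun phi g).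
by apply: (karamata_le hc fs f0 g0); [rewrite f1 g1 | exact: majorized_nfun].
Qed.

Lemma sum_concave_supermodular p q r w :
  prob_vec p -> prob_vec q -> is_meet p q r -> is_join p q w ->
  G p + G q <= G r + G w.
Proof.
move=> hp hq [hr [rp [rq _]]] hj.
have [_ p0 p1] := prob_vec_nfun hp; have [_ q0 q1] := prob_vec_nfun hq.
have [rs r0 r1] := prob_vec_nfun hr; have [ws w0 w1] := prob_vec_nfun hj.1.
set u := join_incr (nfun p) (nfun q); set v := meet_incr (nfun p) (nfun q).
have uv0 i : (i < n)%N -> 0 <= u i /\ 0 <= v i.
  move=> iN; have := join_incr_between (nfun p) (nfun q) i.
  have := p0 i iN; have := q0 i iN; rewrite /v /meet_incr -/u.
  by case: (leP (nfun p i) (nfun q i)) => ? ? ? /andP[? ?]; split; lra.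
rewrite (sum_nfun phi p) (sum_nfun phi q) (sum_nfun phi r) (sum_nfun phi w).
apply: (@le_trans _ _ (\sum_(i < n) phi (v i) + \sum_(i < n) phi (u i))).
  rewrite -!big_split /=; apply: ler_sum => i _; rewrite [phi (v _) + _]addrC.
  by have := two_point_le hc (p0 i (ltn_ord i)) (q0 i (ltn_ord i))
    (join_incr_between _ _ i).
apply: lerD.
- apply: (karamata_le hc rs r0 (fun i iN => (uv0 i iN).2)).
    by rewrite partial_sum_meet_incr p1 q1 minxx.
  move=> k kN; rewrite partial_sum_meet_incr le_min.
  by rewrite !majorized_nfun.
- apply: (flat_majorant_le hc ws w0 (fun i iN => (uv0 i iN).1)).
  + by rewrite partial_sum_join_incr p1 q1 maxxx.
  + move=> k kN; rewrite partial_sum_join_incr ge_max.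
    by case: hj => _ [pw [qw _]]; rewrite !majorized_nfun.
  + by move=> k kN; rewrite partial_sum_join_incr; apply: join_flat.
Qed.

Lemma sum_concave_lattice p q r w :
  prob_vec p -> prob_vec q -> is_meet p q r -> is_join p q w ->
  [/\ G p + G q <= G r + G w, G p <= G r & G q <= G r].
Proof.
move=> hp hq hm hj; have [hr [rp [rq _]]] := hm.
by split; [exact: sum_concave_supermodular | exact: sum_concave_majorized ..].
Qed.

End ConcaveSums.

Section SharmaMittal.
Variable R : realType.
Implicit Types a b : R.

Lemma subgradient_sm_expR b : b < 1 ->
  subgradient (fun=> True) (fun t => (expR ((1 - b) * t) - 1) / (1 - b))
    (fun s => expR ((1 - b) * s)).
Proof.
move=> b1 s t _ _; have b0 : 0 < 1 - b by lra.
have -> : (expR ((1 - b) * s) - 1) / (1 - b) + expR ((1 - b) * s) * (t - s) =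
    (expR ((1 - b) * s) * (1 + ((1 - b) * t - (1 - b) * s)) - 1) / (1 - b).
  by field; rewrite gt_eqF.
by rewrite ler_pM2r ?invr_gt0 // lerD2r expR_tangent.
Qed.

Lemma subgradient_sm_powR a b : a != 1 -> b != 1 -> b <= a ->
  subgradient (fun t => 0 < t) (fun t => (t `^ ((1 - b) / (1 - a)) - 1) / (1 - b))
    (fun s => s `^ ((1 - b) / (1 - a)) / s / (1 - a)).
Proof.
move=> a1 b1 ba s t s0 t0; set g := (1 - b) / (1 - a).
have a1' : 1 - a != 0 by rewrite subr_eq0 eq_sym.
have b1' : 1 - b != 0 by rewrite subr_eq0 eq_sym.
have -> : (s `^ g - 1) / (1 - b) + s `^ g / s / (1 - a) * (t - s) =
    (s `^ g + g * (s `^ g / s) * (t - s) - 1) / (1 - b).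
  by rewrite /g; field; rewrite a1' b1' gt_eqF.
have [b_lt1 | b_gt1] : b < 1 \/ 1 < b by move: b1; rewrite neq_lt => /orP.
- rewrite ler_pM2r ?invr_gt0 ?subr_gt0 // lerD2r; apply: powR_ge_tangent => //.
  have [a_lt1 | a_gt1] : a < 1 \/ 1 < a by move: a1; rewrite neq_lt => /orP.
    by rewrite /g ler_pdivlMr ?subr_gt0 // mul1r lerD2l lerN2 ba.
  by rewrite /g orbC pmulr_rle0 ?subr_gt0 // invr_le0 subr_le0 ltW.
- rewrite ler_nM2r ?invr_lt0 ?subr_lt0 // lerD2r; apply: powR_le_tangent => //.
  have -> : g = (b - 1) / (a - 1) by rewrite /g -opprB -[1 - a]opprB invrN mulrNN.
  have a_gt1 : 1 < a := lt_le_trans b_gt1 ba.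
  rewrite divr_ge0 ?subr_ge0 ?(ltW b_gt1) ?(ltW a_gt1) //=.
  by rewrite ler_pdivrMr ?subr_gt0 // mul1r lerD2r.
Qed.

Lemma subgradient_sm_ln a : 1 < a ->
  subgradient (fun t => 0 < t) (fun t => ln t / (1 - a)) (fun s => s^-1 / (1 - a)).
Proof.
move=> a1 s t s0 t0.
have -> : ln s / (1 - a) + s^-1 / (1 - a) * (t - s) = (ln s + (t - s) / s) / (1 - a).
  by field; rewrite (gt_eqF s0) andbT subr_eq0 eq_sym (gt_eqF a1).
by rewrite ler_nM2r ?invr_lt0 ?subr_lt0 // ln_le_tangent.
Qed.

Lemma powsum_gt0 n a (f : 'I_n -> R) : prob_vec f -> 0 < powsum a f.
Proof.
move=> [f0 [f1 _]]; have fa0 i : 0 <= f i `^ a by apply: powR_ge0.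
rewrite lt_neqAle sumr_ge0 ?andbT //; apply/eqP => /esym/psumr_eq0P f_eq0.
have : \sum_(i < n) f i = 0.
  by apply: big1 => i _; apply: (@powR_eq0_eq0 _ _ a); apply: f_eq0.
by rewrite f1 => /eqP; rewrite oner_eq0.
Qed.

End SharmaMittal.

Section SharmaMittalCases.
Variables (R : realType) (n' : nat) (p q r w : 'I_n'.+1 -> R).
Hypotheses (hp : prob_vec p) (hq : prob_vec q) (hm : is_meet p q r) (hj : is_join p q w).
Let hr : prob_vec r := hm.1.
Let hw : prob_vec w := hj.1.

Lemma sharma_mittal1_supermodular b : b <= 1 ->
  sharma_mittal 1 b p + sharma_mittal 1 b q <= sharma_mittal 1 b r + sharma_mittal 1 b w.
Proof.
move=> b1; have shE (f : 'I_n'.+1 -> R) : shannon f = \sum_i - (f i * ln (f i)).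
  by rewrite sumrN.
have [] := sum_concave_lattice (@supergradient_entropy R) hp hq hm hj.
rewrite -!shE /sharma_mittal eqxx; have [// | b_neq1 H pr qr] := eqVneq b 1.
have b_lt1 : b < 1 by rewrite lt_neqAle b_neq1.
apply: (pair_le_of_subgradient_ge0 (subgradient_sm_expR b_lt1) _ I I I I pr qr H).
by move=> s _; apply: expR_ge0.
Qed.

Lemma sharma_mittal_lt1_supermodular a b : 0 < a < 1 -> b <= a ->
  sharma_mittal a b p + sharma_mittal a b q <= sharma_mittal a b r + sharma_mittal a b w.
Proof.
move=> /andP[a0 a1] ba; have b1 := le_lt_trans ba a1.
have a01 : 0 < a <= 1 by rewrite a0 ltW.
have [H pr qr] := sum_concave_lattice (supergradient_powR a01) hp hq hm hj.
have [a_neq1 b_neq1] : a != 1 /\ b != 1 by rewrite !neq_lt a1 b1.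
have pos := @powsum_gt0 R n'.+1 a.
rewrite /sharma_mittal (negbTE a_neq1) (negbTE b_neq1).
apply: (pair_le_of_subgradient_ge0 (subgradient_sm_powR a_neq1 b_neq1 ba) _
  (pos r hr) (pos w hw) (pos p hp) (pos q hq) pr qr H).
by move=> s s0; rewrite !divr_ge0 ?powR_ge0 ?subr_ge0 ?(ltW s0) ?(ltW a1).
Qed.

Lemma sharma_mittal_gt1_supermodular a b : 1 < a -> b <= a ->
  sharma_mittal a b p + sharma_mittal a b q <= sharma_mittal a b r + sharma_mittal a b w.
Proof.
move=> a1 ba; have [] := sum_concave_lattice (supergradient_NpowR (ltW a1)) hp hq hm hj.
rewrite !sumrN -!/(powsum a _) !lerN2 -!opprD lerN2 => H rp rq.
have a_neq1 : a != 1 by rewrite neq_lt a1 orbT.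
have pos := @powsum_gt0 R n'.+1 a.
rewrite /sharma_mittal (negbTE a_neq1); have [_ | b1] := eqVneq b 1.
  apply: (pair_le_of_subgradient_le0 (subgradient_sm_ln a1) _
    (pos r hr) (pos w hw) (pos p hp) (pos q hq) rp rq H) => s s0.
  by rewrite pmulr_rle0 ?invr_gt0 // invr_le0 subr_le0 ltW.
apply: (pair_le_of_subgradient_le0 (subgradient_sm_powR a_neq1 b1 ba) _
  (pos r hr) (pos w hw) (pos p hp) (pos q hq) rp rq H) => s s0.
by rewrite pmulr_rle0 ?divr_gt0 ?powR_gt0 // invr_le0 subr_le0 ltW.
Qed.

End SharmaMittalCases.

Theorem theorem2 (R : realType) (n : nat) (alpha beta : R)
    (halpha : 0 < alpha) (hbeta : beta <= alpha)
    (p q r w : 'I_n -> R) :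
  prob_vec p -> prob_vec q -> is_meet p q r -> is_join p q w ->
  sharma_mittal alpha beta p + sharma_mittal alpha beta q <=
  sharma_mittal alpha beta r + sharma_mittal alpha beta w.
Proof.
case: n p q r w => [|n'] p q r w hp hq hm hj.
  by exfalso; case: hp => _ [+ _]; rewrite big_ord0 => /eqP; rewrite eq_sym oner_eq0.
case: (ltgtP alpha 1) => [a_lt1 | a_gt1 | a1].
- by apply: sharma_mittal_lt1_supermodular; rewrite ?halpha.
- exact: sharma_mittal_gt1_supermodular.
- by rewrite a1 in hbeta *; apply: sharma_mittal1_supermodular.
Qed.
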